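(* Let $C=L_1;\ldots;L_d$ be a sorting network on $n$ channels of depth $d$ that contains no redundant comparators. Then for every $k$ with $1\le k<d$ and every comparator $(i,j)\in L_k$, the comparator $(i,j)$ connects adjacent $k$-blocks of $C$; that is, every channel $m$ with $i<m<j$ belongs either to the $k$-block containing $i$ or to the $k$-block containing $j$.
   Context: Channels are numbered $1,\ldots,n$. A comparator network on $n$ channels of depth $d$ is a sequence $C=L_1;\ldots;L_d$ of layers; each layer is a set of comparators $(i,j)$ with $1\le i<j\le n$, and each channel occurs in at most one comparator of a given layer. An input $\bar x\in\{0,1\}^n$ propagates through $C$ as follows: $\bar x_0=\bar x$, and for $0<k\le d$, $\bar x_k$ is obtained from $\bar x_{k-1}$ by, for each comparator $(i,j)\in L_k$, putting the minimum of the values at positions $i,j$ of $\bar x_{k-1}$ at position $i$ and the maximum at position $j$ (other positions unchanged). The output is $C(\bar x)=\bar x_d$. $C$ is a sorting network if $C(\bar x)$ is sorted in non-decreasing order for every $\bar x\in\{0,1\}^n$. A comparator $(i,j)$ in layer $L_\ell$ is redundant if for every input $\bar x\in\{0,1\}^n$ the entries of $\bar x_{\ell-1}$ at positions $i$ and $j$ satisfy $(\bar x_{\ell-1})_i\le(\bar x_{\ell-1})_j$. For $0\le k<d$, the $k$-blocks of $C$ are the vertex sets of the connected components of the graph on the channels $\{1,\ldots,n\}$ having an edge $\{i,j\}$ for every comparator $(i,j)$ occurring in some layer $L_{k'}$ with $k'>k$; thus the $k$-blocks partition the set of channels. *)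

From mathcomp Require Import all_boot.
Set Implicit Arguments. Unset Strict Implicit. Unset Printing Implicit Defensive.

(* Channels 1..n are represented by 'I_n (channel c+1 <-> ordinal c); the
   order on channels is preserved. *)
Definition comparator (n : nat) := ('I_n * 'I_n)%type.
Definition layer (n : nat) := seq (comparator n).
Definition network (n : nat) := seq (layer n).
Definition input (n : nat) := {ffun 'I_n -> bool}.

Definition wf_comp n (c : comparator n) : bool := (c.1 < c.2)%N.

Definition wf_layer n (L : layer n) : bool :=
  all (@wf_comp n) L && uniq (flatten [seq [:: c.1; c.2] | c <- L]).

Definition wf_network n (C : network n) : bool := all (@wf_layer n) C.

Definition apply_layer n (L : layer n) (x : input n) : input n :=
  [ffun p => if has (fun c : comparator n => c.1 == p) L
             then [exists c in L, (c.1 == p) && (x c.1 && x c.2)]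
             else if has (fun c : comparator n => c.2 == p) L
             then [exists c in L, (c.2 == p) && (x c.1 || x c.2)]
             else x p].

Definition state n (C : network n) (k : nat) (x : input n) : input n :=
  foldl (fun y L => apply_layer L y) x (take k C).

Definition output n (C : network n) (x : input n) : input n :=
  state C (size C) x.

Definition sorted_input n (y : input n) : bool :=
  [forall i : 'I_n, forall j : 'I_n, (i <= j)%N ==> (y i <= y j)].

Definition sorting_network n (C : network n) : Prop :=
  forall x : input n, sorted_input (output C x).

(* comparator c in layer L_l (1-indexed l) is redundant *)
Definition redundant n (C : network n) (l : nat) (c : comparator n) : Prop :=
  forall x : input n, (state C l.-1 x c.1 <= state C l.-1 x c.2).

Definition no_redundant n (C : network n) : Prop :=
  forall l c, (1 <= l <= size C)%N -> c \in nth [::] C l.-1 -> ~ redundant C l c.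

(* edge relation: a comparator joining a and b in some layer L_k' with k' > k *)
Definition later_edge n (C : network n) (k : nat) : rel 'I_n :=
  fun a b => [exists k' : 'I_(size C), (k < k'.+1)%N &&
     [exists c in nth [::] C k', ((c.1 == a) && (c.2 == b)) || ((c.1 == b) && (c.2 == a))]].

Definition same_block n (C : network n) (k : nat) (a b : 'I_n) : bool :=
  connect (later_edge C k) a b.

From mathcomp Require Import all_boot zify.
Set Implicit Arguments. Unset Strict Implicit. Unset Printing Implicit Defensive.

(* Add one element p to a set A of channels and run the network on the
   indicators of A and of p |: A: after every layer the two states differ in
   exactly one channel, and a comparator either leaves this extra 1 in place or
   moves it to its other end.  For a sorting network an input of weight w ends
   as the sorted vector, so when w = n - m - 1 the extra 1 ends in channel m.
   If m lies in neither later block of c = (i, j) in L_k, the extra 1 can thus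
   never sit on i or j before layer k, so the values entering c are the same
   for all inputs of weight w (any two are linked by single exchanges); the
   upper set {t | t > m} shows that they are (0, 1).  By monotonicity every
   input is then ordered at c, whether it is below or above a weight-w set, so
   c would be redundant. *)

Section Layer.
Variable n : nat.
Implicit Types (L : layer n) (x y : input n) (c : comparator n) (p r : 'I_n).

Lemma wf_layer_lt L c : wf_layer L -> c \in L -> c.1 < c.2.
Proof. by case/andP => /allP wfL _ /wfL. Qed.

Lemma wf_layer_share L c c' p : wf_layer L -> c \in L -> c' \in L ->
  p \in [:: c.1; c.2] -> p \in [:: c'.1; c'.2] -> c = c'.
Proof.
case/andP => _; elim: L => [|d L IH] // uniq_dL.
have : uniq ([:: d.1; d.2] ++ flatten [seq [:: e.1; e.2] | e <- L]) by [].
rewrite cat_uniq => /and3P[_ d_notin_L uniq_L].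
have in_L e : e \in L -> p \in [:: e.1; e.2] ->
    p \in flatten [seq [:: e.1; e.2] | e <- L].
  by move=> eL pe; apply/flatten_mapP; exists e.
rewrite !in_cons => /orP[/eqP-> | cL] /orP[/eqP-> | c'L] pc pc' //.
- by case/negP: d_notin_L; apply/hasP; exists p; first exact: in_L pc'.
- by case/negP: d_notin_L; apply/hasP; exists p; first exact: in_L pc.
- exact: IH.
Qed.

Lemma channel_cases L p :
  (exists2 c, c \in L & p \in [:: c.1; c.2]) \/
  (forall c, c \in L -> p \notin [:: c.1; c.2]).
Proof.
have [/hasP[c cL pc] | /hasPn idle] := boolP (has (fun c => p \in [:: c.1; c.2]) L).
  by left; exists c.
by right.
Qed.

Lemma apply_layer_low L x c : wf_layer L -> c \in L ->
  apply_layer L x c.1 = x c.1 && x c.2.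
Proof.
move=> wfL cL; rewrite ffunE.
have -> : has (fun e : comparator n => e.1 == c.1) L by apply/hasP; exists c.
apply/existsP/idP => [[e /andP[eL /andP[/eqP e1 xe]]] | xc]; last first.
  by exists c; rewrite cL eqxx xc.
suff ec : e = c by rewrite -ec.
by apply: (wf_layer_share (p := c.1)) wfL eL cL _ _; rewrite !inE ?e1 eqxx.
Qed.

Lemma apply_layer_high L x c : wf_layer L -> c \in L ->
  apply_layer L x c.2 = x c.1 || x c.2.
Proof.
move=> wfL cL; rewrite ffunE.
have -> : has (fun e : comparator n => e.1 == c.2) L = false.
  apply/negbTE/hasPn => e eL; apply/negP => /eqP e1.
  have ec : e = c.
    by apply: (wf_layer_share (p := c.2)) wfL eL cL _ _; rewrite !inE ?e1 eqxx ?orbT.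
  by have := wf_layer_lt wfL cL; rewrite -e1 ec ltnn.
have -> : has (fun e : comparator n => e.2 == c.2) L by apply/hasP; exists c.
apply/existsP/idP => [[e /andP[eL /andP[/eqP e2 xe]]] | xc]; last first.
  by exists c; rewrite cL eqxx xc.
suff ec : e = c by rewrite -ec.
by apply: (wf_layer_share (p := c.2)) wfL eL cL _ _; rewrite !inE ?e2 eqxx ?orbT.
Qed.

Lemma apply_layer_idle L x p : (forall c, c \in L -> p \notin [:: c.1; c.2]) ->
  apply_layer L x p = x p.
Proof.
move=> idle; rewrite ffunE.
have idle1 : has (fun c : comparator n => c.1 == p) L = false.
  by apply/negbTE/hasPn => c /idle; rewrite !inE eq_sym => /norP[].
have idle2 : has (fun c : comparator n => c.2 == p) L = false.
  by apply/negbTE/hasPn => c /idle; rewrite !inE (eq_sym p c.2) => /norP[].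
by rewrite idle1 idle2.
Qed.

Lemma apply_layer_local L x y r :
  (forall c, c \in L -> r \in [:: c.1; c.2] -> x c.1 = y c.1 /\ x c.2 = y c.2) ->
  x r = y r -> apply_layer L x r = apply_layer L y r.
Proof.
move=> agree xyr; rewrite !ffunE; case: ifP => _.
  apply: eq_existsb => e; case eL: (e \in L) => //=; case: eqP => //= e1.
  by have [|-> ->] := agree e eL; rewrite // -e1 mem_head.
case: ifP => _ //.
apply: eq_existsb => e; case eL: (e \in L) => //=; case: eqP => //= e2.
by have [|-> ->] := agree e eL; rewrite // -e2 !inE eqxx orbT.
Qed.

Lemma apply_layer_mono L x y : (forall r, x r ==> y r) ->
  forall r, apply_layer L x r ==> apply_layer L y r.
Proof.
move=> xy r; rewrite !ffunE; case: ifP => _.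
  apply/implyP => /existsP[e /andP[eL /andP[e1 /andP[x1 x2]]]].
  by apply/existsP; exists e; rewrite eL e1 (implyP (xy _) x1) (implyP (xy _) x2).
case: ifP => _ //.
apply/implyP => /existsP[e /andP[eL /andP[e2 /orP[xe | xe]]]];
  by apply/existsP; exists e; rewrite eL e2 /= (implyP (xy _) xe) ?orbT.
Qed.

End Layer.

Section AddOne.
Variable n : nat.
Implicit Types (L : layer n) (x y : input n) (c : comparator n) (p q r : 'I_n).

Definition add_one x y p := x p = false /\ forall r, y r = (r == p) || x r.

Lemma apply_layer_add_one_idle L x y p :
  (forall c, c \in L -> p \notin [:: c.1; c.2]) ->
  add_one x y p -> add_one (apply_layer L x) (apply_layer L y) p.
Proof.
move=> idle [xp yE]; split; first by rewrite apply_layer_idle.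
move=> r; have [->|rp] := eqVneq r p; first by rewrite apply_layer_idle // yE eqxx.
apply: apply_layer_local => [c cL _|]; last by rewrite yE (negbTE rp).
by move: (idle c cL); rewrite !yE !inE !(eq_sym p) => /norP[/negbTE-> /negbTE->].
Qed.

Lemma apply_layer_add_one_comparator L x y p c : wf_layer L -> c \in L ->
  p \in [:: c.1; c.2] -> add_one x y p ->
  exists2 q, q \in [:: c.1; c.2] & add_one (apply_layer L x) (apply_layer L y) q.
Proof.
move=> wfL cL pc [xp yE].
have c12 : (c.1 == c.2) = false.
  by apply/negbTE; rewrite -val_eqE neq_ltn (wf_layer_lt wfL cL).
have c21 : (c.2 == c.1) = false by rewrite eq_sym.
(* The extra 1 ends at the low end iff the partner channel already carries a 1. *)
pose q := if x c.1 || x c.2 then c.1 else c.2.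
have qc : q \in [:: c.1; c.2] by rewrite /q; case: ifP; rewrite !inE eqxx ?orbT.
exists q => //.
have outside r : r \notin [:: c.1; c.2] -> apply_layer L y r = apply_layer L x r.
  move=> rc; apply: apply_layer_local => [e eL re|]; last first.
    by rewrite yE; case: eqP rc => // ->; rewrite pc.
  have : p \notin [:: e.1; e.2].
    by apply: contraNN rc => pe; rewrite -(wf_layer_share wfL eL cL pe pc).
  by rewrite !yE !inE !(eq_sym p) => /norP[/negbTE-> /negbTE->].
have x_low : x c.1 && x c.2 = false.
  by move: pc; rewrite !inE => /orP[] /eqP pE; rewrite -pE xp ?andbF.
have y_low : y c.1 && y c.2 = x c.1 || x c.2.
  by move: pc xp; rewrite !yE !inE => /orP[] /eqP -> ->; rewrite eqxx ?c12 ?c21.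
have y_high : y c.1 || y c.2.
  by move: pc; rewrite !yE !inE => /orP[] /eqP ->; rewrite eqxx ?orbT.
split => [|r].
  by rewrite /q; case: ifP => b; rewrite ?apply_layer_low ?apply_layer_high ?b.
have [rc | rc] := boolP (r \in [:: c.1; c.2]); last first.
  by rewrite outside //; case: eqP rc => // ->; rewrite qc.
move: rc; rewrite !inE => /orP[] /eqP ->.
  by rewrite !apply_layer_low // y_low x_low /q; case: ifP; rewrite ?eqxx ?c12.
by rewrite !apply_layer_high // y_high /q; case: ifP; rewrite ?eqxx ?c21.
Qed.

End AddOne.

Section Run.
Variable n : nat.
Implicit Types (L : layer n) (Ls : seq (layer n)) (x y : input n) (p q r : 'I_n).

Definition run Ls x : input n := foldl (fun y L => apply_layer L y) x Ls.

Lemma output_run (C : network n) x : output C x = run C x.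
Proof. by rewrite /output /state take_size. Qed.

Lemma run_add_one (E : rel 'I_n) Ls x y p : all (@wf_layer n) Ls ->
  (forall L c, L \in Ls -> c \in L -> E c.1 c.2 && E c.2 c.1) ->
  add_one x y p -> exists2 q, add_one (run Ls x) (run Ls y) q & connect E p q.
Proof.
elim: Ls x y p => [|L Ls IH] x y p /=; first by exists p => //; exact: connect0.
case/andP => wfL wfLs edges xy.
have [q1 xy1 pq1] : exists2 q1,
    add_one (apply_layer L x) (apply_layer L y) q1 & connect E p q1.
  have [[c cL pc] | idle] := channel_cases L p; last first.
    by exists p; [exact: apply_layer_add_one_idle | exact: connect0].
  have [q1 qc xy1] := apply_layer_add_one_comparator wfL cL pc xy.
  exists q1 => //; have /andP[e12 e21] := edges L c (mem_head _ _) cL.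
  move: pc qc; rewrite !inE => /orP[]/eqP-> /orP[]/eqP->;
    by [apply: connect0 | apply: connect1].
have [|q xyq q1q] := IH _ _ _ wfLs _ xy1.
  by move=> L' c L'Ls; apply: edges; rewrite inE L'Ls orbT.
by exists q => //; exact: connect_trans pq1 q1q.
Qed.

Lemma run_mono Ls x y : (forall r, x r ==> y r) -> forall r, run Ls x r ==> run Ls y r.
Proof. by elim: Ls x y => [|L Ls IH] x y //= xy; apply: IH; apply: apply_layer_mono. Qed.

Lemma sorted_inputP x : sorted_input x -> forall a b : 'I_n, a <= b -> x a -> x b.
Proof.
move=> /forallP sx a b ab; move: (sx a) => /forallP/(_ b)/implyP/(_ ab).
by case: (x a); case: (x b).
Qed.

Lemma apply_layer_sorted L x : wf_layer L -> sorted_input x -> apply_layer L x = x.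
Proof.
move=> wfL sx; apply/ffunP => r.
have [[c cL] | idle] := channel_cases L r; last exact: apply_layer_idle.
have le12 := ltnW (wf_layer_lt wfL cL).
rewrite !inE => /orP[] /eqP ->.
  by rewrite apply_layer_low //; case x1: (x c.1); rewrite ?(sorted_inputP sx le12 x1).
by rewrite apply_layer_high //; case x1: (x c.1); rewrite ?(sorted_inputP sx le12 x1).
Qed.

Lemma run_sorted Ls x : all (@wf_layer n) Ls -> sorted_input x -> run Ls x = x.
Proof. by elim: Ls => //= L Ls IH /andP[wfL wfLs] sx; rewrite apply_layer_sorted ?IH. Qed.

Definition threshold K : input n := [ffun r : 'I_n => K <= r].

Lemma sorted_threshold K : sorted_input (threshold K).
Proof.
apply/forallP => a; apply/forallP => b; apply/implyP => ab; rewrite !ffunE.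
by case: (leqP K a) => // Ka; rewrite (leq_trans Ka ab).
Qed.

Lemma add_one_threshold K y q : K <= n -> add_one (threshold K) y q ->
  sorted_input y -> q = K.-1 :> nat /\ y = threshold K.-1.
Proof.
move=> Kn [+ yE] sy; rewrite ffunE => /negbT; rewrite -ltnNge => qK.
have qE : q.+1 = K.
  apply/eqP; rewrite eqn_leq qK /= leqNgt; apply/negP => qK'.
  have q1n : q.+2 <= n := leq_trans qK' Kn.
  have := sorted_inputP sy (leqnSn q : q <= Ordinal q1n).
  rewrite !yE eqxx !ffunE -val_eqE /= leqNgt qK' (gtn_eqF (ltnSn q)).
  by move/(_ isT).
split; first by rewrite -qE.
by apply/ffunP => r; rewrite yE !ffunE -qE /= [RHS]leq_eqVlt val_eqE eq_sym.
Qed.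

End Run.

Arguments threshold {n} K.
Arguments sorted_threshold {n} K.

Section FiniteSets.
Variable T : finType.
Implicit Types A B : {set T}.

Lemma exists_subset_card A s : s <= #|A| ->
  exists2 B : {set T}, B \subset A & #|B| = s.
Proof.
case/card_geqP => t [uniq_t size_t tA]; exists [set x in t].
  by apply/subsetP => x; rewrite inE => /tA.
by rewrite cardsE (card_uniqP uniq_t).
Qed.

Lemma exists_superset_card A s : #|A| <= s <= #|T| ->
  exists2 B : {set T}, A \subset B & #|B| = s.
Proof.
case/andP => As sT.
have [B BA cardB] : exists2 B : {set T}, B \subset ~: A & #|B| = #|T| - s.
  by apply: exists_subset_card; have := cardsC A; lia.
exists (~: B); first by rewrite subsetC.
by have := cardsC B; lia.
Qed.

Lemma card_setU1D1 A p q : p \notin A -> q \in A -> #|(p |: A) :\ q| = #|A|.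
Proof.
by move=> pA qA; have := cardsD1 q (p |: A); rewrite cardsU1 pA in_setU1 qA orbT /=; lia.
Qed.

Lemma card_exchange (R : Type) (f : {set T} -> R) s :
  (forall A p q, #|A| = s -> p \notin A -> q \in A -> f ((p |: A) :\ q) = f A) ->
  forall A B, #|A| = s -> #|B| = s -> f A = f B.
Proof.
move=> exch A B; move Ed : #|A :\: B| => d; elim: d A Ed => [|d IH] A AB As Bs.
  suff -> : A = B by [].
  by apply/eqP; rewrite eqEcard -setD_eq0 -cards_eq0 AB As Bs /=.
have cardBA : #|B :\: A| = d.+1.
  by apply/eqP; rewrite -(eqn_add2l #|B :&: A|) cardsID setIC -AB cardsID As Bs.
have [q qAB] : exists q, q \in A :\: B by apply/card_gt0P; rewrite AB.
have [p pBA] : exists p, p \in B :\: A by apply/card_gt0P; rewrite cardBA.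
move: (qAB) (pBA); rewrite !inE => /andP[qB qA] /andP[pA pB].
rewrite -(exch A p q) //; apply: IH => //.
  have -> : (p |: A) :\ q :\: B = (A :\: B) :\ q.
    apply/setP => t; rewrite !inE; have [->|_] := eqVneq t p.
      by rewrite pB /= andbF.
    by rewrite /= andbCA.
  by move: AB; rewrite (@cardsD1 _ q) qAB => -[].
by rewrite card_setU1D1.
Qed.

End FiniteSets.

Section Indicator.
Variable n : nat.
Implicit Types A B : {set 'I_n}.

Definition indicator A : input n := [ffun r => r \in A].

Lemma indicator_add_one A p : p \notin A -> add_one (indicator A) (indicator (p |: A)) p.
Proof. by move=> pA; split=> [|r]; rewrite !ffunE ?in_setU1 // (negbTE pA). Qed.

Lemma indicator_subset A B : A \subset B -> forall r, indicator A r ==> indicator B r.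
Proof. by move=> /subsetP AB r; rewrite !ffunE; apply/implyP/AB. Qed.

Lemma card_ord_gt m : m < n -> #|[set t : 'I_n | m < t]| = n - m.+1.
Proof.
move=> mn.
have card_le : #|[set t : 'I_n | t <= m]| = m.+1.
  rewrite cardsE -[m.+1](size_iota 0) -(filter_iota_leq 0 mn) -val_enum_ord.
  by rewrite size_filter count_map cardE size_filter /enum_mem filter_predT.
have <- : ~: [set t : 'I_n | t <= m] = [set t : 'I_n | m < t].
  by apply/setP => t; rewrite !inE ltnNge.
by have := cardsC [set t : 'I_n | t <= m]; rewrite card_ord card_le; lia.
Qed.

Lemma output_indicator (C : network n) A : wf_network C -> sorting_network C ->
  output C (indicator A) = threshold (n - #|A|).
Proof.
rewrite output_run => wfC sortC.
move Es : #|A| => s; elim: s A Es => [|s IH] A As.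
  have -> : A = set0 by apply/eqP; rewrite -cards_eq0 As.
  have -> : indicator set0 = threshold n.
    by apply/ffunP => r; rewrite !ffunE inE leqNgt ltn_ord.
  by rewrite subn0 run_sorted ?sorted_threshold.
have [p pA] : exists p, p \in A by apply/card_gt0P; rewrite As.
have A'E : A = p |: (A :\ p) by rewrite setD1K.
have A's : #|A :\ p| = s by move: As; rewrite (cardsD1 p) pA => -[].
have [q out_add _] := run_add_one (E := fun _ _ => true) wfC (fun _ _ _ _ => erefl)
  (indicator_add_one (negbT (setD11 p A))).
rewrite -A'E IH // in out_add.
have sorted_out := sortC (indicator A); rewrite output_run in sorted_out.
by have [_ ->] := add_one_threshold (leq_subr _ _) out_add sorted_out; rewrite subnS.
Qed.

End Indicator.

Section Network.
Variables (n : nat) (C : network n).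
Implicit Types (x : input n) (a b : 'I_n).

Lemma output_split k x : 0 < k <= size C ->
  output C x = run (drop k C) (apply_layer (nth [::] C k.-1) (run (take k.-1 C) x)).
Proof.
case: k => // k /= kC; rewrite output_run /run -{1}(cat_take_drop k.+1 C) foldl_cat.
by rewrite (take_nth [::] kC) foldl_rcons.
Qed.

Lemma later_edge_drop k L c : L \in drop k C -> c \in L ->
  later_edge C k c.1 c.2 && later_edge C k c.2 c.1.
Proof.
case/(nthP [::]) => t; rewrite size_drop ltn_subRL nth_drop => kt <- cL.
by apply/andP; split; apply/existsP; exists (Ordinal kt);
  rewrite /= ltnS leq_addr /=; apply/existsP; exists c; rewrite cL !eqxx ?orbT.
Qed.

Lemma same_blockC k a b : same_block C k a b = same_block C k b a.
Proof.
apply: sym_connect_sym => {}a {}b; apply: eq_existsb => k'; congr (_ && _).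
by apply: eq_existsb => e; rewrite orbC.
Qed.

End Network.

Section FarChannel.
Variables (n : nat) (C : network n) (k : nat) (c : comparator n) (m : 'I_n).
Hypotheses (wfC : wf_network C) (sortC : sorting_network C).
Hypotheses (k_gt0 : 0 < k) (k_le : k <= size C) (cCk : c \in nth [::] C k.-1).
Hypotheses (far1 : ~~ same_block C k c.1 m) (far2 : ~~ same_block C k c.2 m).

Let wf_layer_k : wf_layer (nth [::] C k.-1).
Proof. by apply: (allP wfC); apply: mem_nth; rewrite prednK. Qed.

Let wf_prefix : all (@wf_layer n) (take k.-1 C).
Proof. by apply/allP => L /mem_take; apply: (allP wfC). Qed.

Let wf_suffix : all (@wf_layer n) (drop k C).
Proof. by apply/allP => L /mem_drop; apply: (allP wfC). Qed.

Definition comparator_inputs (A : {set 'I_n}) : bool * bool :=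
  let y := run (take k.-1 C) (indicator A) in (y c.1, y c.2).

Lemma comparator_inputs_add (A : {set 'I_n}) p : p \notin A -> #|A| = n - m.+1 ->
  comparator_inputs (p |: A) = comparator_inputs A.
Proof.
move=> pA As.
have [r before _] := run_add_one (E := fun _ _ => true) wf_prefix
  (fun _ _ _ _ => erefl) (indicator_add_one pA).
have [rc | rc] := boolP (r \in [:: c.1; c.2]); last first.
  case: before => _ stateE; rewrite /comparator_inputs !stateE.
  by move: rc; rewrite !inE !(eq_sym r) => /norP[/negbTE-> /negbTE->].
have [q qc after] := apply_layer_add_one_comparator wf_layer_k cCk rc before.
have [q' out qq'] := run_add_one wf_suffix (@later_edge_drop _ C k) after.
rewrite -!output_split ?k_gt0 // !output_indicator // cardsU1 pA As in out.
have [q'm _] := add_one_threshold (leq_subr _ _) out (sorted_threshold _).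
have {}q'm : q' = m by apply: val_inj; rewrite /= q'm; have := ltn_ord m; lia.
by move: qc; rewrite !inE => /orP[] /eqP qE; [case/negP: far1 | case/negP: far2];
  rewrite /same_block -qE -q'm.
Qed.

Lemma comparator_inputs_card (A B : {set 'I_n}) : #|A| = n - m.+1 -> #|B| = n - m.+1 ->
  comparator_inputs A = comparator_inputs B.
Proof.
apply: card_exchange => {}A p q As pA qA.
have qA' : q \notin (p |: A) :\ q by rewrite setD11.
rewrite -(comparator_inputs_add qA') ?card_setU1D1 // setD1K ?in_setU1 ?qA ?orbT //.
exact: comparator_inputs_add.
Qed.

Lemma far_channel_redundant : c.1 < m < c.2 -> redundant C k c.
Proof.
move=> /andP[c1m mc2] x.
pose Y := [set t : 'I_n | m < t].
have inputs_Y : comparator_inputs Y = (false, true).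
  have YE : indicator Y = threshold m.+1 by apply/ffunP => t; rewrite !ffunE inE.
  rewrite /comparator_inputs YE run_sorted ?sorted_threshold // !ffunE.
  by rewrite leqNgt ltnS (ltnW c1m) mc2.
have inputs_w (B : {set 'I_n}) : #|B| = n - m.+1 -> comparator_inputs B = (false, true).
  by move=> Bs; rewrite -inputs_Y; apply: comparator_inputs_card; rewrite ?card_ord_gt.
have -> : x = indicator [set t | x t] by apply/ffunP => t; rewrite !ffunE inE.
set X := [set t | x t].
have [small | big] := leqP #|X| (n - m.+1).
  have [|B XB Bs] := exists_superset_card (s := n - m.+1) (A := X).
    by rewrite small card_ord leq_subr.
  have := run_mono (take k.-1 C) (indicator_subset XB) c.1.
  by move: (inputs_w B Bs) => -[-> _]; rewrite implybF => /negbTE->.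
have [B BX Bs] := exists_subset_card (ltnW big).
have := run_mono (take k.-1 C) (indicator_subset BX) c.2.
by move: (inputs_w B Bs) => -[_ ->] /= ->; rewrite leq_b1.
Qed.

End FarChannel.

Theorem theorem2 (n : nat) (C : network n) :
  wf_network C -> sorting_network C -> no_redundant C ->
  forall (k : nat), (1 <= k < size C)%N ->
  forall c : comparator n, c \in nth [::] C k.-1 ->
  forall m : 'I_n, (c.1 < m < c.2)%N ->
    same_block C k m c.1 \/ same_block C k m c.2.
Proof.
move=> wfC sortC no_red k /andP[k_gt0 k_lt] c cCk m c1mc2.
rewrite !(same_blockC _ _ m).
have [near1 | far1] := boolP (same_block C k c.1 m); first by left.
have [near2 | far2] := boolP (same_block C k c.2 m); first by right.
have [] := no_red k c _ cCk; first by rewrite k_gt0 ltnW.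
exact: far_channel_redundant (ltnW k_lt) cCk far1 far2 c1mc2.
Qed.
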